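(* Consider any trajectory of the hybrid devil-stick model below, and suppose that for some $k$, $D\rho_k=0$ and $D\rho_{k+1}=0$. Then $$S_m\,\omega_{k+1}-S_p\,\omega_k=-K\sin\theta_k\left[\frac{1}{\omega_k}+\frac{1}{\omega_{k+1}}\right],$$ where $K=\frac{g(\Delta\theta^* )^2}{4R\sin(\Delta\theta^*/2)}$, $S_m=\sin(\phi-\Delta\theta^*/2)$, $S_p=\sin(\phi+\Delta\theta^*/2)$. In particular, if $\phi=\pi/2$ (resp. $\phi=-\pi/2$) this becomes $\omega_{k+1}-\omega_k=P\sin\theta_k\left[\frac1{\omega_k}+\frac1{\omega_{k+1}}\right]$ with $P=-\frac{g(\Delta\theta^* )^2}{2R\sin\Delta\theta^*}$ (resp. $P=\frac{g(\Delta\theta^* )^2}{2R\sin\Delta\theta^*}$).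
   Context: Constants: $m,J,g,R>0$, $\Delta\theta^*\in(0,\pi)$, $\phi\in(-\pi,\pi]$. The hybrid model consists of sequences $h(k),v(k)\in\mathbb{R}^2$, $\theta_k\in\mathbb{R}$, $\omega_k>0$, inputs $I_k,r_k\in\mathbb{R}$ and $\delta_k>0$ satisfying, for all $k\ge1$: $h(k+1)=h(k)+v(k)\delta_k+\begin{bmatrix}-\sin\theta_k\\ \cos\theta_k\end{bmatrix}\frac{I_k\delta_k}{m}+\begin{bmatrix}0\\-\tfrac12 g\delta_k^2\end{bmatrix}$, $v(k+1)=v(k)+\begin{bmatrix}-\sin\theta_k\\ \cos\theta_k\end{bmatrix}\frac{I_k}{m}+\begin{bmatrix}0\\-g\delta_k\end{bmatrix}$, $\theta_{k+1}=\theta_k+\Delta\theta^*$, $\omega_{k+1}=\omega_k+\frac{I_kr_k}{J}$, $\delta_k=\Delta\theta^*/\omega_{k+1}$. Define $\Phi(\theta)=\begin{bmatrix}R\cos(\theta-\phi)\\ R\sin(\theta-\phi)\end{bmatrix}$, $\Psi(\theta,\omega)=\frac{\omega}{\Delta\theta^*}[\Phi(\theta)-\Phi(\theta-\Delta\theta^* )]-\begin{bmatrix}0\\ \frac{g\Delta\theta^*}{2\omega}\end{bmatrix}$, $\rho_k=h(k)-\Phi(\theta_k)$ and $D\rho_k=v(k)-\Psi(\theta_k,\omega_k)$. *)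

From Stdlib Require Import Reals Lra.
Open Scope R_scope.

Definition Phi (Rr phi th : R) : R * R :=
  (Rr * cos (th - phi), Rr * sin (th - phi)).

Definition Psi (Rr phi g dth th om : R) : R * R :=
  (om / dth * (fst (Phi Rr phi th) - fst (Phi Rr phi (th - dth))),
   om / dth * (snd (Phi Rr phi th) - snd (Phi Rr phi (th - dth))) - g * dth / (2 * om)).

Definition rho (Rr phi : R) (h : nat -> R * R) (theta : nat -> R) (k : nat) : R * R :=
  (fst (h k) - fst (Phi Rr phi (theta k)), snd (h k) - snd (Phi Rr phi (theta k))).

Definition Drho (Rr phi g dth : R) (v : nat -> R * R) (theta omega : nat -> R) (k : nat)
  : R * R :=
  (fst (v k) - fst (Psi Rr phi g dth (theta k) (omega k)),
   snd (v k) - snd (Psi Rr phi g dth (theta k) (omega k))).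

Definition hybrid_trajectory (m J g Rr dth : R)
  (h v : nat -> R * R) (theta omega I r delta : nat -> R) : Prop :=
  forall k : nat, (1 <= k)%nat ->
    0 < omega k /\ 0 < delta k /\
    h (S k) = (fst (h k) + fst (v k) * delta k + (- sin (theta k)) * (I k * delta k / m),
               snd (h k) + snd (v k) * delta k + cos (theta k) * (I k * delta k / m)
                 - / 2 * g * (delta k) ^ 2) /\
    v (S k) = (fst (v k) + (- sin (theta k)) * (I k / m),
               snd (v k) + cos (theta k) * (I k / m) - g * delta k) /\
    theta (S k) = theta k + dth /\
    omega (S k) = omega k + I k * r k / J /\
    delta k = dth / omega (S k).

(* Write Δ for Δθ^*.  Projecting the velocity jump v(k+1) - v(k) onto (cos θ_k, sin θ_k),
   which is orthogonal to the impulse direction (-sin θ_k, cos θ_k), eliminates the unknown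
   impulse I_k and leaves only gravity: the projection equals -g δ_k sin θ_k =
   -g Δ sin θ_k / ω_{k+1}.  When Dρ_k = Dρ_{k+1} = 0 both velocities are given by Ψ, whose
   projection follows from the chord identity cos a - cos (a + Δ) = 2 sin (Δ/2) sin (a + Δ/2);
   solving the resulting linear relation for the ω's gives the recurrence.  For φ = ±π/2 both
   S_m and S_p equal ±cos (Δ/2), and sin Δ = 2 sin (Δ/2) cos (Δ/2) turns K into P. *)

From Stdlib Require Import Reals Lra Lia.
Open Scope R_scope.

Definition dot (u w : R * R) : R := fst u * fst w + snd u * snd w.

Definition radial (th : R) : R * R := (cos th, sin th).

Lemma dot_Phi_radial (Rr phi t th : R) :
  dot (Phi Rr phi t) (radial th) = Rr * cos (th - t + phi).
Proof.
  unfold dot, Phi, radial; simpl.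
  replace (th - t + phi) with (th - (t - phi)) by ring.
  rewrite (cos_minus th); ring.
Qed.

Lemma cos_chord (a d : R) : cos a - cos (a + d) = 2 * sin (d / 2) * sin (a + d / 2).
Proof.
  rewrite form2.
  replace ((a - (a + d)) / 2) with (- (d / 2)) by field.
  replace ((a + (a + d)) / 2) with (a + d / 2) by field.
  rewrite sin_neg; ring.
Qed.

Lemma dot_Psi_radial (Rr phi g dth t th om : R) :
  dot (Psi Rr phi g dth t om) (radial th)
  = 2 * Rr * sin (dth / 2) / dth * om * sin (th - t + phi + dth / 2)
    - g * dth / (2 * om) * sin th.
Proof.
  transitivity (om / dth * (dot (Phi Rr phi t) (radial th)
                            - dot (Phi Rr phi (t - dth)) (radial th))
                - g * dth / (2 * om) * sin th).
  { unfold dot, Psi, radial; simpl; ring. }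
  rewrite !dot_Phi_radial.
  replace (th - (t - dth) + phi) with (th - t + phi + dth) by ring.
  replace (Rr * cos (th - t + phi) - Rr * cos (th - t + phi + dth))
    with (Rr * (cos (th - t + phi) - cos (th - t + phi + dth))) by ring.
  rewrite cos_chord; unfold Rdiv; ring.
Qed.

Lemma Drho_eq0 {Rr phi g dth : R} {v : nat -> R * R} {theta omega : nat -> R} {k : nat} :
  Drho Rr phi g dth v theta omega k = (0, 0) ->
  v k = Psi Rr phi g dth (theta k) (omega k).
Proof.
  unfold Drho; intros E; injection E as E1 E2.
  rewrite (surjective_pairing (v k)); unfold Psi, Phi; simpl.
  f_equal; lra.
Qed.

Section Trajectory.

Context {m J g Rr dth : R} {h v : nat -> R * R} {theta omega I r delta : nat -> R}.
Hypothesis Htraj : hybrid_trajectory m J g Rr dth h v theta omega I r delta.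

Lemma velocity_jump_radial (k : nat) : (1 <= k)%nat ->
  dot (v (S k)) (radial (theta k))
  = dot (v k) (radial (theta k)) - g * dth / omega (S k) * sin (theta k).
Proof.
  intros Hk; destruct (Htraj k Hk) as (_ & _ & _ & Hv & _ & _ & Hdel).
  rewrite Hv, Hdel; unfold dot, radial; simpl; unfold Rdiv; ring.
Qed.

Lemma omega_relation (phi : R) (HR : 0 < Rr) (Hdth : 0 < dth < PI) (k : nat) :
  (1 <= k)%nat ->
  Drho Rr phi g dth v theta omega k = (0, 0) ->
  Drho Rr phi g dth v theta omega (S k) = (0, 0) ->
  sin (phi - dth / 2) * omega (S k) - sin (phi + dth / 2) * omega k
  = - (g * dth ^ 2 / (4 * Rr * sin (dth / 2))) * sin (theta k)
      * (/ omega k + / omega (S k)).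
Proof.
  intros Hk H0 H1.
  destruct (Htraj k Hk) as (Hw & _ & _ & _ & Hth & _).
  destruct (Htraj (S k) ltac:(lia)) as (Hw' & _).
  pose proof (velocity_jump_radial k Hk) as jump.
  rewrite (Drho_eq0 H0), (Drho_eq0 H1), Hth,
    !dot_Psi_radial in jump.
  replace (theta k - theta k + phi + dth / 2) with (phi + dth / 2) in jump by ring.
  replace (theta k - (theta k + dth) + phi + dth / 2) with (phi - dth / 2) in jump by field.
  assert (Hs : 0 < sin (dth / 2)) by (apply sin_gt_0; lra).
  apply Rmult_eq_reg_l with (2 * Rr * sin (dth / 2) / dth).
  2: { apply Rgt_not_eq, Rdiv_lt_0_compat; nra. }
  transitivity (- (g * dth / 2) * sin (theta k) * (/ omega k + / omega (S k))).
  - replace (g * dth / (2 * omega k)) with (g * dth / 2 * / omega k) in jump by (field; lra).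
    replace (g * dth / (2 * omega (S k))) with (g * dth / 2 * / omega (S k)) in jump
      by (field; lra).
    replace (g * dth / omega (S k)) with (2 * (g * dth / 2) * / omega (S k)) in jump
      by (field; lra).
    lra.
  - field; lra.
Qed.

End Trajectory.

Lemma half_angle_rescale (g Rr dth y z : R) (HR : 0 < Rr) (Hdth : 0 < dth < PI) :
  cos (dth / 2) * y = g * dth ^ 2 / (4 * Rr * sin (dth / 2)) * z ->
  y = g * dth ^ 2 / (2 * Rr * sin dth) * z.
Proof.
  intros E.
  assert (Hs : 0 < sin (dth / 2)) by (apply sin_gt_0; lra).
  assert (Hc : 0 < cos (dth / 2)) by (apply cos_gt_0; lra).
  replace (sin dth) with (2 * sin (dth / 2) * cos (dth / 2))
    by (rewrite <- sin_2a; f_equal; field).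
  apply Rmult_eq_reg_l with (cos (dth / 2)); [| lra].
  rewrite E; field; lra.
Qed.

Theorem mainTheorem6 (m J g Rr dth phi : R)
  (Hm : 0 < m) (HJ : 0 < J) (Hg : 0 < g) (HR : 0 < Rr)
  (Hdth : 0 < dth < PI) (Hphi : - PI < phi <= PI)
  (h v : nat -> R * R) (theta omega I r delta : nat -> R)
  (Htraj : hybrid_trajectory m J g Rr dth h v theta omega I r delta)
  (k : nat) (Hk : (1 <= k)%nat)
  (H0 : Drho Rr phi g dth v theta omega k = (0, 0))
  (H1 : Drho Rr phi g dth v theta omega (S k) = (0, 0)) :
  let K := g * dth ^ 2 / (4 * Rr * sin (dth / 2)) in
  let Sm := sin (phi - dth / 2) in
  let Sp := sin (phi + dth / 2) in
  Sm * omega (S k) - Sp * omega k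
    = - K * sin (theta k) * (/ omega k + / omega (S k))
  /\ (phi = PI / 2 ->
      omega (S k) - omega k
        = (- (g * dth ^ 2 / (2 * Rr * sin dth))) * sin (theta k)
            * (/ omega k + / omega (S k)))
  /\ (phi = - (PI / 2) ->
      omega (S k) - omega k
        = (g * dth ^ 2 / (2 * Rr * sin dth)) * sin (theta k)
            * (/ omega k + / omega (S k))).
Proof.
  intros K Sm Sp.
  pose proof (omega_relation Htraj phi HR Hdth k Hk H0 H1) as Main.
  split; [exact Main |].
  split; intros Hp; subst phi.
  - replace (- (g * dth ^ 2 / (2 * Rr * sin dth)) * sin (theta k)
               * (/ omega k + / omega (S k)))
      with (g * dth ^ 2 / (2 * Rr * sin dth) * - (sin (theta k) * (/ omega k + / omega (S k))))
      by ring.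
    apply half_angle_rescale; auto.
    rewrite sin_shift, <- cos_sin in Main; lra.
  - rewrite Rmult_assoc; apply half_angle_rescale; auto.
    replace (- (PI / 2) - dth / 2) with (- (PI / 2 + dth / 2)) in Main by ring.
    replace (- (PI / 2) + dth / 2) with (- (PI / 2 - dth / 2)) in Main by ring.
    rewrite !sin_neg, sin_shift, <- cos_sin in Main; lra.
Qed.
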